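(* Fix $a>1$ and define, for $(x,y)\in\mathbb R^2$ with $x+y\neq 0$, $$T(x,y)=\big(f(x,y),g(x,y)\big),\qquad f(x,y)=\frac{a^x(a^{2y}-1)}{(a^x+a^y)(a^{x+y}-1)},\quad g(x,y)=\frac{2a^{x+y}}{(a^x+a^y)(a^{x+y}-1)}.$$ Then: (a) for every $c$, the image under $T$ of the part of the vertical line $x=c$ lying in the half-plane $x+y>0$ is contained in a line through the point $P=(1,0)$ of the $uv$-plane; (b) for every $c$, the image under $T$ of the part of the horizontal line $y=c$ lying in the half-plane $x+y>0$ is contained in a line through the origin $O=(0,0)$ of the $uv$-plane; (c) for every axes-parallel square with vertices $A=(x,y)$, $B=(x+l,y)$, $C=(x+l,y+l)$, $D=(x,y+l)$, where $l>0$ and $x+y>0$ (so the square lies in the half-plane $x+y>0$), the points $A'=T(A),B'=T(B),C'=T(C),D'=T(D)$ are the vertices, in this order, of a tangential quadrilateral; in particular $|A'B'|+|C'D'|=|B'C'|+|D'A'|$.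
   Context: A quadrilateral is tangential if it admits an inscribed circle tangent to all four sides; equivalently (Pitot–Steiner), the sums of the lengths of the two pairs of opposite sides are equal. *)

From Stdlib Require Import Reals.
Open Scope R_scope.

Definition pt := (R * R)%type.

Definition apow (a x : R) : R := Rpower a x.

Definition Tf (a x y : R) : R :=
  apow a x * (apow a (2 * y) - 1) / ((apow a x + apow a y) * (apow a (x + y) - 1)).
Definition Tg (a x y : R) : R :=
  2 * apow a (x + y) / ((apow a x + apow a y) * (apow a (x + y) - 1)).
Definition T (a : R) (p : pt) : pt := (Tf a (fst p) (snd p), Tg a (fst p) (snd p)).

(* A line in the plane, given by (alpha, beta, gamma) with (alpha,beta) <> (0,0):
   { (u,v) | alpha*u + beta*v + gamma = 0 }. *)
Definition on_line (al be ga : R) (p : pt) : Prop := al * fst p + be * snd p + ga = 0.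

Definition pdist (p q : pt) : R :=
  sqrt ((fst q - fst p) ^ 2 + (snd q - snd p) ^ 2).

Definition cross (p q r : pt) : R :=
  (fst q - fst p) * (snd r - snd p) - (snd q - snd p) * (fst r - fst p).

(* A, B, C, D (in this order) are the vertices of a (strictly) convex
   quadrilateral with orientation s (s = 1 counterclockwise, s = -1 clockwise). *)
Definition convex_quad_or (s : R) (A B C D : pt) : Prop :=
  0 < s * cross A B C /\ 0 < s * cross B C D /\
  0 < s * cross C D A /\ 0 < s * cross D A B.

(* Q lies on the interior side of the oriented side PQ' at distance exactly r
   from the line PQ'. *)
Definition tangent_side (s : R) (Q : pt) (r : R) (P P' : pt) : Prop :=
  s * cross P P' Q = r * pdist P P'.

(* Since Q is on the
   interior side of each side line at distance r, the disc lies in the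
   quadrilateral and touches each side (the touching point lies on the side). *)
Definition tangential_quad (A B C D : pt) : Prop :=
  exists s : R, (s = 1 \/ s = -1) /\ convex_quad_or s A B C D /\
  exists (Q : pt) (r : R), 0 < r /\
    tangent_side s Q r A B /\ tangent_side s Q r B C /\
    tangent_side s Q r C D /\ tangent_side s Q r D A.

From Stdlib Require Import Reals Lra Psatz.
Open Scope R_scope.

(* Writing p = a^x, q = a^y, the map T becomes the rational map
   Phi(p,q) = (p(q^2-1), 2pq) / D(p,q),  D(p,q) = (p+q)(pq-1),
   on the region p, q > 0, pq > 1 (the image of the half-plane x + y > 0),
   and an axes-parallel square of side l becomes the "rectangle"
   {p, pt} x {q, qt} with t = a^l > 1.
   (a),(b): for fixed p (resp. q) the points Phi(p,q) satisfy one explicit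
   linear equation through (1,0) (resp. through the origin).
   (c): the images of the four sides of a rectangle are straight segments,
   whose lengths we compute in closed form; the cross products at the four
   corners factor into positive terms, so the image is a convex
   quadrilateral; for a square an explicit point is at equal signed
   distance from the four side lines (the incircle), and Pitot's equality is
   an identity between the four closed-form lengths. *)

Definition adm (p q : R) : Prop := 0 < p /\ 0 < q /\ 1 < p * q.

Definition D (p q : R) : R := (p + q) * (p * q - 1).

Definition Phi (p q : R) : pt := (p * (q * q - 1) / D p q, 2 * (p * q) / D p q).

(* Up to the factor q^2+1 (resp. p^2+1), the length of the image of the
   horizontal segment [p,p'] x {q} (resp. vertical segment {p} x [q,q']). *)
Definition hstep (p p' q : R) : R := q * (p' - p) * (p * p' + 1) / (D p q * D p' q).
Definition vstep (p q q' : R) : R := p * (q' - q) * (q * q' + 1) / (D p q * D p q').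

(* The region is an up-set, so it contains the whole rectangle once it
   contains its lower-left corner. *)
Lemma adm_grow p q p' q' : adm p q -> p <= p' -> q <= q' -> adm p' q'.
Proof. intros (hp & hq & hpq) hp' hq'; unfold adm; repeat split; nra. Qed.

Lemma D_pos p q : adm p q -> 0 < D p q.
Proof. intros (hp & hq & hpq); unfold D; apply Rmult_lt_0_compat; lra. Qed.

(* Discharges the nonvanishing side conditions left by [field] on the region. *)
Ltac adm_nonzero :=
  repeat match goal with H : adm _ _ |- _ => destruct H as (? & ? & ?) end;
  repeat split; nra.

Lemma Phi_vertical_line p q :
  adm p q -> on_line (2 * p) (p * p - 1) (- (2 * p)) (Phi p q).
Proof. intros h; unfold on_line, Phi, D; cbn [fst snd]; field; adm_nonzero. Qed.

Lemma Phi_horizontal_line p q :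
  adm p q -> on_line (2 * q) (- (q * q - 1)) 0 (Phi p q).
Proof. intros h; unfold on_line, Phi, D; cbn [fst snd]; field; adm_nonzero. Qed.

Lemma hstep_pos p p' q : adm p q -> adm p' q -> p < p' -> 0 < hstep p p' q.
Proof.
  intros h h' hlt; pose proof (D_pos _ _ h); pose proof (D_pos _ _ h').
  destruct h as (hp & hq & _); unfold hstep.
  apply Rdiv_lt_0_compat; [|nra].
  apply Rmult_lt_0_compat; [|nra]; nra.
Qed.

Lemma vstep_pos p q q' : adm p q -> adm p q' -> q < q' -> 0 < vstep p q q'.
Proof.
  intros h h' hlt; pose proof (D_pos _ _ h); pose proof (D_pos _ _ h').
  destruct h as (hp & hq & _); unfold vstep.
  apply Rdiv_lt_0_compat; [|nra].
  apply Rmult_lt_0_compat; [|nra]; nra.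
Qed.

(* Needed because the quadrilateral runs along two of its sides backwards. *)
Lemma pdist_sym P P' : pdist P P' = pdist P' P.
Proof. unfold pdist; f_equal; ring. Qed.

Lemma pdist_of_square P P' L : 0 <= L ->
  (fst P' - fst P) ^ 2 + (snd P' - snd P) ^ 2 = L ^ 2 -> pdist P P' = L.
Proof. intros hL h; unfold pdist; rewrite h; now apply sqrt_pow2. Qed.

Lemma pdist_horizontal p p' q : adm p q -> adm p' q -> p < p' ->
  pdist (Phi p q) (Phi p' q) = (q * q + 1) * hstep p p' q.
Proof.
  intros h h' hlt; apply pdist_of_square.
  - pose proof (hstep_pos _ _ _ h h' hlt); nra.
  - unfold Phi, hstep, D; cbn [fst snd]; field; adm_nonzero.
Qed.

Lemma pdist_vertical p q q' : adm p q -> adm p q' -> q < q' ->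
  pdist (Phi p q) (Phi p q') = (p * p + 1) * vstep p q q'.
Proof.
  intros h h' hlt; apply pdist_of_square.
  - pose proof (vstep_pos _ _ _ h h' hlt); nra.
  - unfold Phi, vstep, D; cbn [fst snd]; field; adm_nonzero.
Qed.

(* The image of any rectangle [p,p'] x [q,q'] in the region is a convex,
   counterclockwise quadrilateral: the cross product at each corner is
   2 D(corner) times the two adjacent (positive) side factors. *)
Lemma Phi_rectangle_convex p p' q q' : adm p q -> p < p' -> q < q' ->
  convex_quad_or 1 (Phi p q) (Phi p' q) (Phi p' q') (Phi p q').
Proof.
  intros h hp hq.
  assert (h1 : adm p' q) by (apply (adm_grow p q); auto; lra).
  assert (h2 : adm p' q') by (apply (adm_grow p q); auto; lra).
  assert (h3 : adm p q') by (apply (adm_grow p q); auto; lra).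
  pose proof (hstep_pos _ _ _ h h1 hp) as hAB.
  pose proof (vstep_pos _ _ _ h1 h2 hq) as hBC.
  pose proof (hstep_pos _ _ _ h3 h2 hp) as hDC.
  pose proof (vstep_pos _ _ _ h h3 hq) as hAD.
  assert (turnB : cross (Phi p q) (Phi p' q) (Phi p' q')
                  = 2 * D p' q * hstep p p' q * vstep p' q q')
    by (unfold cross, Phi, hstep, vstep, D; cbn [fst snd]; field; adm_nonzero).
  assert (turnC : cross (Phi p' q) (Phi p' q') (Phi p q')
                  = 2 * D p' q' * vstep p' q q' * hstep p p' q')
    by (unfold cross, Phi, hstep, vstep, D; cbn [fst snd]; field; adm_nonzero).
  assert (turnD : cross (Phi p' q') (Phi p q') (Phi p q)
                  = 2 * D p q' * hstep p p' q' * vstep p q q')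
    by (unfold cross, Phi, hstep, vstep, D; cbn [fst snd]; field; adm_nonzero).
  assert (turnA : cross (Phi p q') (Phi p q) (Phi p' q)
                  = 2 * D p q * vstep p q q' * hstep p p' q)
    by (unfold cross, Phi, hstep, vstep, D; cbn [fst snd]; field; adm_nonzero).
  unfold convex_quad_or; rewrite !Rmult_1_l, turnA, turnB, turnC, turnD.
  pose proof (D_pos _ _ h); pose proof (D_pos _ _ h1);
  pose proof (D_pos _ _ h2); pose proof (D_pos _ _ h3).
  repeat split;
    (apply Rmult_lt_0_compat; [apply Rmult_lt_0_compat; [apply Rmult_lt_0_compat|]|]); lra.
Qed.

Lemma adm_square p q t : adm p q -> 1 < t ->
  p < p * t /\ q < q * t /\ adm (p * t) q /\ adm (p * t) (q * t) /\ adm p (q * t).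
Proof.
  intros h ht; pose proof h as (hp & hq & _).
  assert (hpt : p < p * t) by nra.
  assert (hqt : q < q * t) by nra.
  refine (conj hpt (conj hqt (conj _ (conj _ _)))); apply (adm_grow p q); auto; lra.
Qed.

Definition incenter (p q t : R) : pt :=
  (p * (q * q * t - 1) / ((p + q) * (p * q * t - 1)),
   p * q * (1 + t) / ((p + q) * (p * q * t - 1))).
Definition inradius (p q t : R) : R := p * q * (t - 1) / ((p + q) * (p * q * t - 1)).

Lemma inradius_pos p q t : adm p q -> 1 < t -> 0 < inradius p q t.
Proof.
  intros (hp & hq & hpq) ht; unfold inradius.
  apply Rdiv_lt_0_compat; [|apply Rmult_lt_0_compat]; nra.
Qed.

Lemma Phi_square_incircle p q t : adm p q -> 1 < t ->
  let A := Phi p q in let B := Phi (p * t) q in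
  let C := Phi (p * t) (q * t) in let D' := Phi p (q * t) in
  tangent_side 1 (incenter p q t) (inradius p q t) A B /\
  tangent_side 1 (incenter p q t) (inradius p q t) B C /\
  tangent_side 1 (incenter p q t) (inradius p q t) C D' /\
  tangent_side 1 (incenter p q t) (inradius p q t) D' A.
Proof.
  intros h ht A B C D'.
  destruct (adm_square p q t h ht) as (hp & hq & h1 & h2 & h3).
  unfold tangent_side; rewrite (pdist_sym C D'), (pdist_sym D' A).
  unfold A, B, C, D'.
  rewrite (pdist_horizontal p (p * t) q), (pdist_vertical (p * t) q (q * t)),
    (pdist_horizontal p (p * t) (q * t)), (pdist_vertical p q (q * t)) by assumption.
  repeat split; unfold cross, incenter, inradius, Phi, hstep, vstep, D; cbn [fst snd];
    field; adm_nonzero.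
Qed.

Lemma Phi_square_pitot p q t : adm p q -> 1 < t ->
  let A := Phi p q in let B := Phi (p * t) q in
  let C := Phi (p * t) (q * t) in let D' := Phi p (q * t) in
  pdist A B + pdist C D' = pdist B C + pdist D' A.
Proof.
  intros h ht A B C D'.
  destruct (adm_square p q t h ht) as (hp & hq & h1 & h2 & h3).
  rewrite (pdist_sym C D'), (pdist_sym D' A); unfold A, B, C, D'.
  rewrite (pdist_horizontal p (p * t) q), (pdist_vertical (p * t) q (q * t)),
    (pdist_horizontal p (p * t) (q * t)), (pdist_vertical p q (q * t)) by assumption.
  unfold hstep, vstep, D; field; adm_nonzero.
Qed.

Lemma Phi_square_tangential p q t : adm p q -> 1 < t ->
  tangential_quad (Phi p q) (Phi (p * t) q) (Phi (p * t) (q * t)) (Phi p (q * t)).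
Proof.
  intros h ht.
  destruct (adm_square p q t h ht) as (hp & hq & _).
  exists 1; split; [now left|]; split.
  - now apply Phi_rectangle_convex.
  - exists (incenter p q t), (inradius p q t); split.
    + now apply inradius_pos.
    + now apply Phi_square_incircle.
Qed.

Lemma apow_pos a x : 0 < apow a x.
Proof. unfold apow, Rpower; apply exp_pos. Qed.

Lemma apow_plus a x y : apow a (x + y) = apow a x * apow a y.
Proof. unfold apow; apply Rpower_plus. Qed.

Lemma apow_gt1 a x : 1 < a -> 0 < x -> 1 < apow a x.
Proof. intros ha hx; unfold apow; rewrite <- (Rpower_O a) by lra; now apply Rpower_lt. Qed.

Lemma T_apow a x y : T a (x, y) = Phi (apow a x) (apow a y).
Proof.
  unfold T, Phi, Tf, Tg, D; cbn [fst snd].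
  replace (2 * y) with (y + y) by ring.
  now rewrite !apow_plus.
Qed.

Lemma adm_apow a x y : 1 < a -> 0 < x + y -> adm (apow a x) (apow a y).
Proof.
  intros ha hxy; split; [|split]; try apply apow_pos.
  rewrite <- apow_plus; now apply apow_gt1.
Qed.

Theorem theorem6p1 (a : R) (ha : 1 < a) :
  (* (a) vertical lines map into lines through P = (1,0) *)
  (forall c : R, exists al be ga : R, (al <> 0 \/ be <> 0) /\
      on_line al be ga (1, 0) /\
      forall y : R, 0 < c + y -> on_line al be ga (T a (c, y))) /\
  (* (b) horizontal lines map into lines through O = (0,0) *)
  (forall c : R, exists al be ga : R, (al <> 0 \/ be <> 0) /\
      on_line al be ga (0, 0) /\
      forall x : R, 0 < x + c -> on_line al be ga (T a (x, c))) /\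
  (* (c) images of axes-parallel squares are tangential quadrilaterals *)
  (forall x y l : R, 0 < l -> 0 < x + y ->
     let A' := T a (x, y) in
     let B' := T a (x + l, y) in
     let C' := T a (x + l, y + l) in
     let D' := T a (x, y + l) in
     tangential_quad A' B' C' D' /\
     pdist A' B' + pdist C' D' = pdist B' C' + pdist D' A').
Proof.
  split; [|split].
  - intro c; pose proof (apow_pos a c) as hp.
    exists (2 * apow a c), (apow a c * apow a c - 1), (- (2 * apow a c)).
    split; [left; lra|]; split; [unfold on_line; cbn; ring|].
    intros y hy; rewrite T_apow; now apply Phi_vertical_line, adm_apow.
  - intro c; pose proof (apow_pos a c) as hq.
    exists (2 * apow a c), (- (apow a c * apow a c - 1)), 0.
    split; [left; lra|]; split; [unfold on_line; cbn; ring|].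
    intros x hx; rewrite T_apow; now apply Phi_horizontal_line, adm_apow.
  - intros x y l hl hxy; cbv zeta.
    rewrite !T_apow, !(apow_plus a _ l).
    pose proof (adm_apow a x y ha hxy); pose proof (apow_gt1 a l ha hl).
    split; [now apply Phi_square_tangential | now apply Phi_square_pitot].
Qed.
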